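(* Let $(\mathbb{C},\mathcal{N})$ be a star-regular category, $\kappa\colon F^*\rightrightarrows A$ a kernel star with coequaliser $f\colon A\to A/F^*$, and $m\colon M\to A$ a monomorphism. Put $J:=F^*\,\underline{\vee}_A\,M$ (a subobject of $A$). Then $(F^*\cap(M\times M))^*\rightrightarrows M$ and $(F^*\cap(J\times J))^*\rightrightarrows J$ are kernel stars, and their quotients satisfy $$\frac{M}{(F^*\cap(M\times M))^*}\;\cong\;\frac{J}{(F^*\cap(J\times J))^*},$$ both being isomorphic, as subobjects of $A/F^*$, to the regular image $f(M)$.
   Context: Throughout, $\mathbb{C}$ is a finitely complete regular category with an ideal of morphisms $\mathcal{N}$ (a class such that $gf\in\mathcal{N}$ whenever $f\in\mathcal{N}$ or $g\in\mathcal{N}$). A star on $X$ is a pair of parallel morphisms $\tau=(\tau_1,\tau_2)\colon T\rightrightarrows X$ with $\tau_1\in\mathcal{N}$; monic if jointly monic. An $\mathcal{N}$-kernel of $f\colon X\to Y$ is a morphism $k$ into $X$ with $fk\in\mathcal{N}$, universal with this property. For a relation $\rho=(\rho_1,\rho_2)\colon R\rightrightarrows X$, $\rho^*=(\rho_1k,\rho_2k)\colon R^*\rightrightarrows X$ with $k$ the $\mathcal{N}$-kernel of $\rho_1$. The kernel star of $f\colon X\to Y$ (denoted by the capital letter, $F^*$) is $Eq(f)^*$ for $Eq(f)$ the kernel pair of $f$; a kernel star on $X$ is the kernel star of some morphism with domain $X$. A star-regular category is a regular multi-pointed category with $\mathcal{N}$-kernels in which every regular epimorphism is a coequaliser of some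 star; there every kernel star $F^*$ on $A$ has a coequaliser $A\to A/F^*$, and $X/S$ denotes the codomain of the coequaliser of a star $S$ on $X$. For a monomorphism $n\colon N\to A$ and a star $\sigma\colon S\rightrightarrows A$, $(S\cap(N\times N))^*$ denotes the star on $N$ obtained by pulling back $\langle\sigma_1,\sigma_2\rangle\colon S\to A\times A$ along $n\times n$ and applying $(-)^*$. Asymmetric join: for a kernel star $F^*$ on $A$ with coequaliser $f$ and a monomorphism $m\colon M\to A$, $F^*\,\underline{\vee}_A\,M:=f^{-1}(f(M))$, the pullback along $f$ of the regular image $f(M)\to A/F^*$ of $fm$; it is a subobject of $A$ through which $m$ factors. *)

(* All limit/colimit notions are stated by their universal properties
   (relationally), so every construction is determined only up to iso,
   exactly as in the paper. *)
Set Implicit Arguments.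
Unset Strict Implicit.

Record Cat := {
  Ob :> Type;
  Hom : Ob -> Ob -> Type;
  idm : forall a, Hom a a;
  comp : forall a b c : Ob, Hom b c -> Hom a b -> Hom a c;
  comp_assoc : forall a b c d (h : Hom c d) (g : Hom b c) (f : Hom a b),
      comp h (comp g f) = comp (comp h g) f;
  comp_id_l : forall a b (f : Hom a b), comp (idm b) f = f;
  comp_id_r : forall a b (f : Hom a b), comp f (idm a) = f
}.

Arguments idm {c} a : rename.
Arguments comp {c a b c0} _ _ : rename.
Arguments Hom {c} _ _ : rename.

Declare Scope cat_scope.
Notation "g ∘ f" := (comp g f) (at level 40, left associativity) : cat_scope.
Open Scope cat_scope.

Definition MorClass (C : Cat) := forall X Y : C, @Hom C X Y -> Prop.

Section Defs.
Variable C : Cat.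

Definition mono (X Y : C) (m : Hom X Y) : Prop :=
  forall Z (x y : Hom Z X), m ∘ x = m ∘ y -> x = y.

Definition iso (X Y : C) (f : Hom X Y) : Prop :=
  exists g : Hom Y X, g ∘ f = idm X /\ f ∘ g = idm Y.

Definition is_terminal (T : C) : Prop :=
  forall X : C, exists! u : Hom X T, True.

Definition is_pullback (X Y Z P : C) (f : Hom X Z) (g : Hom Y Z)
  (p1 : Hom P X) (p2 : Hom P Y) : Prop :=
  f ∘ p1 = g ∘ p2 /\
  forall Q (q1 : Hom Q X) (q2 : Hom Q Y), f ∘ q1 = g ∘ q2 ->
    exists! u : Hom Q P, p1 ∘ u = q1 /\ p2 ∘ u = q2.

Definition finitely_complete : Prop :=
  (exists T : C, is_terminal T) /\
  forall (X Y Z : C) (f : Hom X Z) (g : Hom Y Z),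
    exists P (p1 : Hom P X) (p2 : Hom P Y), is_pullback f g p1 p2.

Definition is_coequalizer (S X Q : C) (t1 t2 : Hom S X) (q : Hom X Q) : Prop :=
  q ∘ t1 = q ∘ t2 /\
  forall Z (h : Hom X Z), h ∘ t1 = h ∘ t2 -> exists! u : Hom Q Z, u ∘ q = h.

Definition regular_epi (X Q : C) (q : Hom X Q) : Prop :=
  exists S (t1 t2 : Hom S X), is_coequalizer t1 t2 q.

Definition regular_cat : Prop :=
  finitely_complete /\
  (forall (X Y R : C) (f : Hom X Y) (p1 p2 : Hom R X),
      is_pullback f f p1 p2 -> exists Q (q : Hom X Q), is_coequalizer p1 p2 q) /\
  (forall (X Y Z P : C) (f : Hom X Z) (g : Hom Y Z) (p1 : Hom P X) (p2 : Hom P Y),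
      regular_epi f -> is_pullback f g p1 p2 -> regular_epi p2).

Variable N : MorClass C.

Definition is_ideal : Prop :=
  forall (X Y Z : C) (f : Hom X Y) (g : Hom Y Z), N f \/ N g -> N (g ∘ f).

Definition is_Nkernel (X Y K : C) (f : Hom X Y) (k : Hom K X) : Prop :=
  N (f ∘ k) /\
  forall Z (g : Hom Z X), N (f ∘ g) -> exists! u : Hom Z K, k ∘ u = g.

Definition has_Nkernels : Prop :=
  forall (X Y : C) (f : Hom X Y), exists K (k : Hom K X), is_Nkernel f k.

Definition is_star (T X : C) (t1 t2 : Hom T X) : Prop := N t1.

Definition star_regular : Prop :=
  regular_cat /\ is_ideal /\ has_Nkernels /\
  forall (X Q : C) (q : Hom X Q), regular_epi q ->
    exists S (t1 t2 : Hom S X), is_star t1 t2 /\ is_coequalizer t1 t2 q.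

(* (s1, s2) : S => X is (a realisation of) the kernel star F^* = Eq(f)^*
   of f : X -> Y: (p1,p2) a kernel pair of f, k an N-kernel of p1. *)
Definition is_kernel_star (X Y S : C) (f : Hom X Y) (s1 s2 : Hom S X) : Prop :=
  exists R (p1 p2 : Hom R X) (k : Hom S R),
    is_pullback f f p1 p2 /\ is_Nkernel p1 k /\ s1 = p1 ∘ k /\ s2 = p2 ∘ k.

Definition is_kernel_star_on (X S : C) (s1 s2 : Hom S X) : Prop :=
  exists Y (f : Hom X Y), is_kernel_star f s1 s2.

(* (t1, t2) : T => M is (a realisation of) (S ∩ (M×M))^* for a mono
   n : M -> A and a star (s1, s2) : S => A: pull back <s1,s2> : S -> A×A
   along n×n (expressed by its universal property: a cone (q, a1, a2) with
   s1 q = n a1, s2 q = n a2, universal), then apply (-)^*, i.e. precompose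
   with an N-kernel k of a1. *)
Definition is_restricted_star (M A S T : C) (n : Hom M A) (s1 s2 : Hom S A)
  (t1 t2 : Hom T M) : Prop :=
  exists P (q : Hom P S) (a1 a2 : Hom P M) (k : Hom T P),
    (s1 ∘ q = n ∘ a1 /\ s2 ∘ q = n ∘ a2 /\
     forall Q (q' : Hom Q S) (b1 b2 : Hom Q M),
       s1 ∘ q' = n ∘ b1 -> s2 ∘ q' = n ∘ b2 ->
       exists! u : Hom Q P, q ∘ u = q' /\ a1 ∘ u = b1 /\ a2 ∘ u = b2) /\
    is_Nkernel a1 k /\ t1 = a1 ∘ k /\ t2 = a2 ∘ k.

End Defs.

(** The restriction of the kernel star of [g] along any [n : M -> A] is the
    kernel star of [g ∘ n].  When [f] is the coequaliser of [Eq(g)^*] and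
    [f ∘ n = i ∘ e] is a regular-image factorisation, the pairs identified by
    [e] are exactly those identified by [g ∘ n], because [i] is mono and [g]
    factors through [f]; so the restricted star is also the kernel star of the
    regular epimorphism [e], hence (star-regularity) has [e] as coequaliser.
    Applied to [n = m] and to [n = j : f^{-1}(f(M)) -> A], whose image
    factorisation is the pulled-back regular epi [p], both quotients are
    [f(M)]. *)

Set Implicit Arguments.
Unset Strict Implicit.

Lemma comp_eq_precomp (C : Cat) (X A B B' D : C) (a : Hom B D) (b : Hom A B)
  (c : Hom B' D) (d : Hom A B') (x : Hom X A) :
  a ∘ b = c ∘ d -> a ∘ (b ∘ x) = c ∘ (d ∘ x).
Proof. intros E. rewrite !comp_assoc, E. reflexivity. Qed.

Lemma iso_comp (C : Cat) (X Y Z : C) (f : Hom X Y) (g : Hom Y Z) :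
  iso f -> iso g -> iso (g ∘ f).
Proof.
  intros [f' [Hf'f Hff']] [g' [Hg'g Hgg']].
  exists (f' ∘ g'). split.
  - rewrite comp_assoc, <- (comp_assoc f' g' g), Hg'g, comp_id_r. exact Hf'f.
  - rewrite comp_assoc, <- (comp_assoc g f f'), Hff', comp_id_r. exact Hgg'.
Qed.

Lemma coequalizer_iso (C : Cat) (T X Q Q' : C) (t1 t2 : Hom T X)
  (q : Hom X Q) (e : Hom X Q') :
  is_coequalizer t1 t2 q -> is_coequalizer t1 t2 e ->
  exists a : Hom Q Q', a ∘ q = e /\ iso a.
Proof.
  intros [Hq Uq] [He Ue].
  destruct (Uq _ e He) as [a [Ha _]].
  destruct (Ue _ q Hq) as [b [Hb _]].
  destruct (Uq _ q Hq) as [uq [_ Huq]].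
  destruct (Ue _ e He) as [ue [_ Hue]].
  exists a. split; [exact Ha|]. exists b. split.
  - transitivity uq; [symmetry|]; apply Huq.
    + rewrite <- comp_assoc, Ha. exact Hb.
    + apply comp_id_l.
  - transitivity ue; [symmetry|]; apply Hue.
    + rewrite <- comp_assoc, Hb. exact Ha.
    + apply comp_id_l.
Qed.

Definition jointly_mono (C : Cat) (X X' T : C) (t1 : Hom T X) (t2 : Hom T X') : Prop :=
  forall Z (w w' : Hom Z T), t1 ∘ w = t1 ∘ w' -> t2 ∘ w = t2 ∘ w' -> w = w'.

Lemma pullback_jointly_mono (C : Cat) (X Y Z P : C) (f : Hom X Z) (g : Hom Y Z)
  (p1 : Hom P X) (p2 : Hom P Y) :
  is_pullback f g p1 p2 -> jointly_mono p1 p2.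
Proof.
  intros [Hc Hu] Q w w' E1 E2.
  destruct (Hu Q _ _ (comp_eq_precomp w Hc)) as [u [_ Hun]].
  transitivity u; [symmetry|]; apply Hun; auto.
Qed.

Section KernelStars.

Variables (C : Cat) (N : MorClass C).
Hypothesis HN : is_ideal N.

(* The universal property of [Eq(h)^*] without uniqueness of the factorisation;
   for a jointly monic pair uniqueness comes for free. *)
Definition weak_kernel_star (X Y T : C) (h : Hom X Y) (t1 t2 : Hom T X) : Prop :=
  h ∘ t1 = h ∘ t2 /\ N t1 /\
  forall Z (x y : Hom Z X), h ∘ x = h ∘ y -> N x ->
    exists w : Hom Z T, t1 ∘ w = x /\ t2 ∘ w = y.

Lemma Nkernel_mono (X Y K : C) (f : Hom X Y) (k : Hom K X) :
  is_Nkernel N f k -> mono k.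
Proof.
  intros [Hn Hu] Z a b E.
  assert (Nka : N (f ∘ (k ∘ a))).
  { rewrite comp_assoc. apply HN. right. exact Hn. }
  destruct (Hu Z (k ∘ a) Nka) as [u [_ Hun]].
  transitivity u; [symmetry|]; apply Hun; auto.
Qed.

Lemma kernel_star_weak (A Y S : C) (g : Hom A Y) (s1 s2 : Hom S A) :
  is_kernel_star N g s1 s2 -> weak_kernel_star g s1 s2.
Proof.
  intros [R [r1 [r2 [k [[Hc Hu] [[Hn Hku] [-> ->]]]]]]].
  split; [|split]; [apply comp_eq_precomp; exact Hc | exact Hn |].
  intros Z x y Exy Nx.
  destruct (Hu Z x y Exy) as [r [[R1 R2] _]].
  assert (Nr : N (r1 ∘ r)) by (rewrite R1; exact Nx).
  destruct (Hku Z r Nr) as [w [Hw _]].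
  exists w. rewrite <- !comp_assoc, Hw. auto.
Qed.

Lemma kernel_star_jointly_mono (A Y S : C) (g : Hom A Y) (s1 s2 : Hom S A) :
  is_kernel_star N g s1 s2 -> jointly_mono s1 s2.
Proof.
  intros [R [r1 [r2 [k [HR [HK [-> ->]]]]]]] Z w w' E1 E2.
  apply (Nkernel_mono HK), (pullback_jointly_mono HR); rewrite !comp_assoc; assumption.
Qed.

Lemma weak_kernel_star_is_kernel_star (X Y T : C) (h : Hom X Y) (t1 t2 : Hom T X) :
  finitely_complete C -> weak_kernel_star h t1 t2 -> jointly_mono t1 t2 ->
  is_kernel_star N h t1 t2.
Proof.
  intros [_ Hpb] [Hc [Hn Hf]] Hjm.
  destruct (Hpb _ _ _ h h) as [R [r1 [r2 HR]]].
  pose proof HR as [Rc Ru].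
  destruct (Ru T t1 t2 Hc) as [k [[K1 K2] _]].
  exists R, r1, r2, k.
  split; [exact HR|]. split; [|split; symmetry; assumption].
  split; [rewrite K1; exact Hn|].
  intros Z z Nz.
  destruct (Hf Z _ _ (comp_eq_precomp z Rc) Nz) as [w [W1 W2]].
  exists w. split.
  - apply (pullback_jointly_mono HR); rewrite comp_assoc; [rewrite K1|rewrite K2]; assumption.
  - intros w' Hw'. apply Hjm.
    + rewrite W1, <- Hw', <- K1, comp_assoc. reflexivity.
    + rewrite W2, <- Hw', <- K2, comp_assoc. reflexivity.
Qed.

Lemma weak_kernel_star_factor (X Y Z T : C) (e : Hom X Y) (h : Hom Y Z)
  (t1 t2 : Hom T X) :
  weak_kernel_star (h ∘ e) t1 t2 -> e ∘ t1 = e ∘ t2 -> weak_kernel_star e t1 t2.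
Proof.
  intros [_ [Hn Hf]] He.
  split; [exact He|]. split; [exact Hn|].
  intros W x y Exy Nx. apply Hf; [|exact Nx].
  rewrite <- !comp_assoc, Exy. reflexivity.
Qed.

Lemma weak_kernel_star_coequalizer (X Q T : C) (e : Hom X Q) (t1 t2 : Hom T X) :
  star_regular N -> regular_epi e -> weak_kernel_star e t1 t2 ->
  is_coequalizer t1 t2 e.
Proof.
  intros [_ [_ [_ Hsr]]] He [Hc [_ Hf]].
  destruct (Hsr _ _ e He) as [S [s1 [s2 [Hs [Sc Su]]]]].
  split; [exact Hc|].
  intros Z h Hh. apply Su.
  destruct (Hf S s1 s2 Sc Hs) as [w [<- <-]].
  rewrite !comp_assoc, Hh. reflexivity.
Qed.

Section Restriction.

Variables (A M S T : C) (n : Hom M A) (s1 s2 : Hom S A) (t1 t2 : Hom T M).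
Hypothesis Hr : is_restricted_star N n s1 s2 t1 t2.

Lemma restricted_star_factors :
  exists s : Hom T S, n ∘ t1 = s1 ∘ s /\ n ∘ t2 = s2 ∘ s.
Proof.
  destruct Hr as [P [q [a1 [a2 [k [[Q1 [Q2 _]] [_ [-> ->]]]]]]]].
  exists (q ∘ k). split; symmetry; apply comp_eq_precomp; assumption.
Qed.

Lemma restricted_star_weak (Y : C) (g : Hom A Y) :
  weak_kernel_star g s1 s2 -> weak_kernel_star (g ∘ n) t1 t2.
Proof.
  intros [Hc [_ Hf]].
  destruct restricted_star_factors as [s [S1 S2]].
  destruct Hr as [P [q [a1 [a2 [k [[_ [_ Qu]] [[Hn Hku] [-> ->]]]]]]]].
  split; [|split; [exact Hn|]].
  - rewrite <- !comp_assoc, S1, S2, !comp_assoc, Hc. reflexivity.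
  - intros Z x y Exy Nx.
    rewrite <- !comp_assoc in Exy.
    assert (Nnx : N (n ∘ x)) by (apply HN; left; exact Nx).
    destruct (Hf Z _ _ Exy Nnx) as [s' [Hs1 Hs2]].
    destruct (Qu Z s' x y Hs1 Hs2) as [u [[_ [U1 U2]] _]].
    assert (Nu : N (a1 ∘ u)) by (rewrite U1; exact Nx).
    destruct (Hku Z u Nu) as [w [Hw _]].
    exists w. rewrite <- !comp_assoc, Hw. auto.
Qed.

Lemma restricted_star_jointly_mono : jointly_mono s1 s2 -> jointly_mono t1 t2.
Proof.
  intros Hjm.
  destruct Hr as [P [q [a1 [a2 [k [[Q1 [Q2 Qu]] [HK [-> ->]]]]]]]].
  intros Z w w' E1 E2.
  rewrite <- !comp_assoc in E1, E2.
  apply (Nkernel_mono HK).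
  (* [(q, a1, a2)] is jointly monic, and [q] is detected by [s1, s2] via [n a1, n a2]. *)
  assert (Hq : q ∘ (k ∘ w) = q ∘ (k ∘ w')).
  { apply Hjm; rewrite !comp_assoc; [rewrite Q1 | rewrite Q2];
      rewrite <- !comp_assoc; [rewrite E1 | rewrite E2]; reflexivity. }
  destruct (Qu Z _ _ _ (comp_eq_precomp (k ∘ w) Q1) (comp_eq_precomp (k ∘ w) Q2))
    as [u [_ Hun]].
  transitivity u; [symmetry|]; apply Hun; [repeat split|].
  rewrite Hq, E1, E2. repeat split.
Qed.

End Restriction.

Lemma restricted_kernel_star (A Y M S T : C) (g : Hom A Y) (n : Hom M A)
  (s1 s2 : Hom S A) (t1 t2 : Hom T M) :
  finitely_complete C -> is_kernel_star N g s1 s2 ->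
  is_restricted_star N n s1 s2 t1 t2 -> is_kernel_star N (g ∘ n) t1 t2.
Proof.
  intros Hfc Hk Hr.
  apply (weak_kernel_star_is_kernel_star Hfc).
  - exact (restricted_star_weak Hr (kernel_star_weak Hk)).
  - exact (restricted_star_jointly_mono Hr (kernel_star_jointly_mono Hk)).
Qed.

Lemma restricted_kernel_star_coequalizer (A Y B M I S T : C) (g : Hom A Y)
  (s1 s2 : Hom S A) (f : Hom A B) (n : Hom M A) (e : Hom M I) (i : Hom I B)
  (t1 t2 : Hom T M) :
  star_regular N -> is_kernel_star N g s1 s2 -> is_coequalizer s1 s2 f ->
  regular_epi e -> mono i -> i ∘ e = f ∘ n ->
  is_restricted_star N n s1 s2 t1 t2 -> is_coequalizer t1 t2 e.
Proof.
  intros HC Hk [Hfc Hfu] He Hi Hie Hr.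
  apply (weak_kernel_star_coequalizer HC He).
  destruct (Hfu Y g (proj1 (kernel_star_weak Hk))) as [h [Hh _]].
  apply (weak_kernel_star_factor (h := h ∘ i)).
  - rewrite <- comp_assoc, Hie, comp_assoc, Hh.
    exact (restricted_star_weak Hr (kernel_star_weak Hk)).
  - destruct (restricted_star_factors Hr) as [s [S1 S2]].
    apply Hi. rewrite !comp_assoc, Hie, <- !comp_assoc, S1, S2, !comp_assoc, Hfc.
    reflexivity.
Qed.

End KernelStars.

Theorem proposition2p9 (C : Cat) (N : MorClass C) (HC : star_regular N)
  (A Y Fs : C) (g : Hom A Y) (k1 k2 : Hom Fs A) (Hk : is_kernel_star N g k1 k2)
  (AF : C) (f : Hom A AF) (Hf : is_coequalizer k1 k2 f)
  (M : C) (m : Hom M A) (Hm : mono m)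
  (I : C) (e : Hom M I) (i : Hom I AF)
  (He : regular_epi e) (Hi : mono i) (Hie : i ∘ e = f ∘ m)
  (J : C) (j : Hom J A) (p : Hom J I) (HJ : is_pullback f i j p)
  (TM : C) (t1 t2 : Hom TM M) (Ht : is_restricted_star N m k1 k2 t1 t2)
  (TJ : C) (u1 u2 : Hom TJ J) (Hu : is_restricted_star N j k1 k2 u1 u2) :
  is_kernel_star_on N t1 t2 /\ is_kernel_star_on N u1 u2 /\
  (exists QM (qM : Hom M QM), is_coequalizer t1 t2 qM) /\
  (exists QJ (qJ : Hom J QJ), is_coequalizer u1 u2 qJ) /\
  forall (QM QJ : C) (qM : Hom M QM) (qJ : Hom J QJ),
    is_coequalizer t1 t2 qM -> is_coequalizer u1 u2 qJ ->
    exists (alpha : Hom QM I) (beta : Hom QJ I) (gamma : Hom QM QJ) (m' : Hom M J),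
      iso alpha /\ iso beta /\ iso gamma /\
      i ∘ alpha ∘ qM = f ∘ m /\ i ∘ beta ∘ qJ = f ∘ j /\
      j ∘ m' = m /\ gamma ∘ qM = qJ ∘ m' /\ beta ∘ gamma = alpha.
Proof.
  pose proof HC as [[Hfc [_ Hstab]] [HN _]].
  pose proof HJ as [Hjp Hju].
  assert (Hp : regular_epi p) by (apply (Hstab _ _ _ _ f i j p); [exists Fs, k1, k2|]; assumption).
  assert (Ce : is_coequalizer t1 t2 e)
    by exact (restricted_kernel_star_coequalizer HN HC Hk Hf He Hi Hie Ht).
  assert (Cp : is_coequalizer u1 u2 p)
    by exact (restricted_kernel_star_coequalizer HN HC Hk Hf Hp Hi (eq_sym Hjp) Hu).
  split; [exists Y, (g ∘ m); exact (restricted_kernel_star HN Hfc Hk Ht)|].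
  split; [exists Y, (g ∘ j); exact (restricted_kernel_star HN Hfc Hk Hu)|].
  split; [exists I, e; exact Ce|].
  split; [exists I, p; exact Cp|].
  intros QM QJ qM qJ CM CJ.
  destruct (coequalizer_iso CM Ce) as [alpha [Ha Ia]].
  destruct (coequalizer_iso CJ Cp) as [beta [Hb Ib]].
  pose proof Ib as [beta' [Hb'b Hbb']].
  destruct (Hju M m e (eq_sym Hie)) as [m' [[Hm'j Hm'p] _]].
  exists alpha, beta, (beta' ∘ alpha), m'.
  split; [exact Ia|]. split; [exact Ib|].
  split; [apply iso_comp; [exact Ia | exists beta; split; assumption]|].
  split; [rewrite <- comp_assoc, Ha; exact Hie|].
  split; [rewrite <- comp_assoc, Hb; symmetry; exact Hjp|].
  split; [exact Hm'j|].
  split.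
  - rewrite <- comp_assoc, Ha, <- Hm'p, <- Hb, !comp_assoc, Hb'b, comp_id_l. reflexivity.
  - rewrite comp_assoc, Hbb', comp_id_l. reflexivity.
Qed.
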